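(* Let $\mu$ be a nonzero finite Borel measure on $\mathbb{T}$, and let $\Gamma_1,\Gamma_2,\dots$ be subsets of $\mathbb{T}$ such that each $\Gamma_n$ is a union of intervals of level $n$ (these intervals are called marked). Suppose there is $K>0$ such that for every positive integer $n$ and every interval $I$ of level $n$, $$\mu(I\cap\Gamma_{n+1})\ \ge\ K\,\mu(I).$$ Then for $\mu$-a.e. $x\in\mathbb{T}$ the following holds: for every positive integer $d$ there exists $n\ge 0$ such that the balls $B_{n+1}(x),B_{n+2}(x),\dots,B_{n+d}(x)$ are all marked, i.e. $B_{n+k}(x)\subseteq\Gamma_{n+k}$ for $k=1,\dots,d$.
   Context: Fix an integer $m\ge 2$ and let $\mathbb{T}=\{0,1,\dots,m-1\}^{\mathbb{N}}$ be the set of infinite sequences with entries in $\{0,\dots,m-1\}$, with metric $d(a,b)=m^{-n(a,b)+1}$ where $n(a,b)$ is the first index at which distinct $a,b$ differ. For an integer $n\ge0$ and $x\in\mathbb{T}$, $B_n(x)=B(x,m^{-n})$ is the set of sequences agreeing with $x$ in the first $n$ positions; these sets are the intervals of level $n$, and the intervals of level $n$ partition $\mathbb{T}$. *)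

From HB Require Import structures.
From mathcomp Require Import all_boot all_order all_algebra.
From mathcomp Require Import all_classical all_reals all_analysis.
Set Implicit Arguments. Unset Strict Implicit. Unset Printing Implicit Defensive.
Import Order.TTheory GRing.Theory Num.Theory.
Local Open Scope classical_set_scope.

(* The sequence space T = {0,..,m-1}^N with the product of discrete
   topologies (= the topology of the metric d(a,b) = m^{-n(a,b)+1}). *)
(* The measure-theory library requires a
   pointed (inhabited) carrier, so -- exactly as MathComp's 'Z_m -- we use
   'I_(m.-2.+2), which is 'I_m whenever m >= 2 (the standing assumption,
   which is also a hypothesis of the theorem). *)
Definition alph (m : nat) : Type := 'I_(m.-2.+2).
HB.instance Definition _ m := Finite.on (alph m).
HB.instance Definition _ m := isPointed.Build (alph m) ord0.

Definition seqspace (m : nat) : Type :=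
  prod_topology (fun _ : nat => discrete_topology (alph m)).

Notation borelT m := (g_sigma_algebraType (@open (seqspace m))).

(* B_n(x): sequences agreeing with x in the first n positions
   (the interval of level n containing x). *)
Definition Bn (m n : nat) (x : borelT m) : set (borelT m) :=
  [set y | forall i, (i < n)%N -> y i = x i].

Definition interval_of_level (m n : nat) (I : set (borelT m)) : Prop :=
  exists x, I = Bn n x.

Definition union_of_level (m n : nat) (G : set (borelT m)) : Prop :=
  exists S : set (borelT m), G = \bigcup_(x in S) Bn n x.

From HB Require Import structures.
From mathcomp Require Import all_boot all_order all_algebra.
From mathcomp Require Import all_classical all_reals all_analysis.
Set Implicit Arguments. Unset Strict Implicit. Unset Printing Implicit Defensive.
Import Order.TTheory GRing.Theory Num.Theory.
Local Open Scope classical_set_scope.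
Local Open Scope ring_scope.

(* Fix d and group the levels into blocks Jd+1, ..., Jd+d.  Applying the
   hypothesis once per level shows that every union S of intervals of level
   Jd keeps at least the proportion c^d (c = min K 1) of its mass on the
   points whose whole block J is marked.  Hence the points for which none of
   the blocks 1, ..., J is marked have mass at most (1 - c^d)^J mu(T), so the
   points with no marked block at all form a null set; a countable union over
   d concludes. *)

Lemma le0_geometric_bound (R : realType) (a M q : R) : 0 <= q < 1 ->
  (forall J, a <= M * q ^+ J) -> a <= 0.
Proof.
move=> /andP[q_ge0 q_lt1] bound; rewrite leNgt; apply/negP => a_gt0.
have normq_lt1 : `|q| < 1 by rewrite ger0_norm.
have [J _ /(_ J (leqnn J))] := cvgr_lt _ (cvg_geometric M normq_lt1) _ a_gt0.
by rewrite /= ltNge bound.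
Qed.

Section LevelSets.
Variable m : nat.
Local Notation T := (borelT m).

Lemma open_measurable (A : set T) : open (A : set (seqspace m)) -> measurable A.
Proof. exact: sub_gen_smallest. Qed.

Lemma Bn_open n (x : T) : open (Bn n x : set (seqspace m)).
Proof.
elim: n => [|n IH].
  by rewrite (_ : Bn 0 x = setT); [exact: openT | apply/seteqP; split].
have -> : Bn n.+1 x = Bn n x `&` proj n @^-1` [set x n].
  apply/seteqP; split => y /= => [Bxy | [Bxy yn] i].
    by split; [move=> i ni; apply: Bxy; rewrite ltnS ltnW | exact: Bxy].
  by rewrite ltnS leq_eqVlt => /predU1P[-> // | ?]; exact: Bxy.
apply: openI => //; apply: open_comp; last exact: discrete_open.
by move=> y _; exact: proj_continuous.
Qed.

Lemma measurable_Bn n (x : T) : measurable (Bn n x).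
Proof. by apply: open_measurable; exact: Bn_open. Qed.

Definition prefix N (y : T) : {ffun 'I_N -> alph m} := [ffun i : 'I_N => y i].

Lemma BnP N (x y : T) : Bn N x y <-> prefix N y = prefix N x.
Proof.
split => [Bxy | /ffunP pxy i ltiN]; first by apply/ffunP => i; rewrite !ffunE Bxy.
by have := pxy (Ordinal ltiN); rewrite !ffunE.
Qed.

Lemma prefix_preimage N (y : T) : prefix N @^-1` [set prefix N y] = Bn N y.
Proof. by apply/seteqP; split => z /BnP. Qed.

Lemma measurable_prefix_preimage N (p : {ffun 'I_N -> alph m}) :
  measurable (prefix N @^-1` [set p]).
Proof.
have [[y <-] | nop] := pselect (exists y, prefix N y = p).
  by rewrite prefix_preimage; exact: measurable_Bn.
rewrite (_ : _ @^-1` _ = set0) //.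
by apply/seteqP; split => // z /= pz; apply: nop; exists z.
Qed.

Definition saturated N (S : set T) := forall x y, S x -> Bn N x y -> S y.

Lemma saturated_le N M (S : set T) : (N <= M)%N -> saturated N S -> saturated M S.
Proof.
by move=> NM satS x y Sx Bxy; apply: (satS x) => // i iN; apply/Bxy/(leq_trans iN).
Qed.

Lemma saturatedI N (S1 S2 : set T) :
  saturated N S1 -> saturated N S2 -> saturated N (S1 `&` S2).
Proof.
by move=> sat1 sat2 x y [S1x S2x] Bxy; split; [exact: (sat1 x) | exact: (sat2 x)].
Qed.

Lemma saturatedC N (S : set T) : saturated N S -> saturated N (~` S).
Proof.
by move=> satS x y nSx Bxy Sy; apply/nSx/(satS y) => // i iN; rewrite Bxy.
Qed.

Lemma union_of_level_saturated N (G : set T) :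
  union_of_level N G -> saturated N G.
Proof.
move=> [S ->] x y [s Ss Bsx] Bxy; exists s => // i iN.
by rewrite Bxy ?Bsx.
Qed.

Lemma union_of_level_measurable N (G : set T) :
  union_of_level N G -> measurable G.
Proof.
move=> [S ->]; apply: open_measurable.
by apply: bigcup_open => s _; exact: Bn_open.
Qed.

Section Measure.
Variables (R : realType) (mu : {finite_measure set T -> \bar R}).

Lemma measure_prefix_sum N (X : set T) : measurable X ->
  mu X = (\sum_(p : {ffun 'I_N -> alph m}) mu (X `&` prefix N @^-1` [set p]))%E.
Proof.
move=> mX; have mXp p : measurable (X `&` prefix N @^-1` [set p]).
  by apply: measurableI => //; exact: measurable_prefix_preimage.
rewrite big_enum_val /= -measure_semi_additive_ord //.
- congr (mu _); apply/seteqP; split => [y Xy | y].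
    by rewrite (bigD1 (enum_rank (prefix N y))) //=; left; rewrite enum_rankK.
  by elim/big_rec: _ => // i A _ IH [[] | /IH].
- apply/trivIsetP => i j _ _ ij.
  apply/seteqP; split => y // [[_ /= yi] [_ /= yj]].
  by move/negP: ij; apply; apply/eqP/enum_val_inj; rewrite -yi -yj.
- by apply: bigsetU_measurable.
Qed.

Lemma saturated_measure_ratio N (S X : set T) (c : R) : 0 <= c ->
  measurable S -> measurable X -> saturated N S ->
  (forall x, c%:E * mu (Bn N x) <= mu (Bn N x `&` X))%E ->
  (c%:E * mu S <= mu (S `&` X))%E.
Proof.
move=> c_ge0 mS mX satS ratio.
rewrite (measure_prefix_sum N mS) (measure_prefix_sum N (measurableI _ _ mS mX)).
rewrite ge0_sume_distrr => [|p _]; last exact: measure_ge0.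
apply: lee_sum => p _.
have [[y [Sy <-]] | noS] := pselect (exists y, S y /\ prefix N y = p).
  have SB : Bn N y `<=` S by move=> z; exact: satS.
  rewrite prefix_preimage (setIidr SB) setIAC (setIidr SB); exact: ratio.
rewrite (_ : S `&` _ = set0) ?measure0 ?mule0 //.
by apply/seteqP; split => // z [Sz /= pz]; apply: noS; exists z.
Qed.

Section MarkedBlocks.
Variables (Gamma : nat -> set T) (c : R).
Hypotheses (c_gt0 : 0 < c) (c_le1 : c <= 1).
Hypothesis Gamma_saturated : forall n, (0 < n)%N -> saturated n (Gamma n).
Hypothesis Gamma_measurable : forall n, (0 < n)%N -> measurable (Gamma n).
Hypothesis Gamma_ratio : forall n, (0 < n)%N -> forall x,
  (c%:E * mu (Bn n x) <= mu (Bn n x `&` Gamma n.+1))%E.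

Fixpoint marked_block N d : set T :=
  if d is d'.+1 then marked_block N d' `&` Gamma (N + d) else setT.

Lemma measurable_marked_block N d : measurable (marked_block N d).
Proof.
elim: d => [|d IH] /=; first exact: measurableT.
by apply: measurableI => //; apply: Gamma_measurable; rewrite addnS.
Qed.

Lemma saturated_marked_block N d : saturated (N + d) (marked_block N d).
Proof.
elim: d => [|d IH] //=; apply: saturatedI.
  by apply: saturated_le IH; rewrite addnS.
by apply: Gamma_saturated; rewrite addnS.
Qed.

Lemma marked_blockP N d x :
  marked_block N d x -> forall k, (1 <= k <= d)%N -> Gamma (N + k) x.
Proof.
elim: d => [_ k /andP[k1 /(leq_trans k1)] // | d IH /= [Bx Gx] k /andP[k1]].
by rewrite leq_eqVlt => /predU1P[-> // | kd]; apply: IH; rewrite ?k1.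
Qed.

Lemma measure_marked_block N d (S : set T) : (0 < N)%N ->
  measurable S -> saturated N S ->
  ((c ^+ d)%:E * mu S <= mu (S `&` marked_block N d))%E.
Proof.
move=> N_gt0 mS satS; elim: d => [|d IH] /=; first by rewrite expr0 mul1e setIT.
rewrite setIA exprS EFinM -muleA.
apply: le_trans (_ : (c%:E * mu (S `&` marked_block N d) <= _)%E).
  by apply: lee_wpmul2l => //; rewrite lee_fin ltW.
apply: (@saturated_measure_ratio (N + d)); rewrite ?ltW //.
- by apply: measurableI => //; exact: measurable_marked_block.
- by apply: Gamma_measurable; rewrite addnS.
- apply: saturatedI; last exact: saturated_marked_block.
  by apply: saturated_le satS; rewrite leq_addr.
- by rewrite addnS => x; apply: Gamma_ratio; rewrite addn_gt0 N_gt0.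
Qed.

Fixpoint unmarked_blocks d J : set T :=
  if J is J'.+1 then unmarked_blocks d J' `&` ~` marked_block (J * d) d else setT.

Lemma measurable_unmarked_blocks d J : measurable (unmarked_blocks d J).
Proof.
elim: J => [|J IH] /=; first exact: measurableT.
by apply: measurableI => //; apply: measurableC; exact: measurable_marked_block.
Qed.

Lemma saturated_unmarked_blocks d J : saturated (J.+1 * d) (unmarked_blocks d J).
Proof.
elim: J => [|J IH] //=; apply: saturatedI.
  by apply: saturated_le IH; rewrite leq_mul2r leqnSn orbT.
apply: saturatedC; rewrite [in X in saturated X _]mulSnr.
exact: saturated_marked_block.
Qed.

Lemma measure_unmarked_blocks d J : (0 < d)%N ->
  fine (mu (unmarked_blocks d J)) <= (1 - c ^+ d) ^+ J * fine (mu setT).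
Proof.
move=> d_gt0; elim: J => [|J IH] /=; first by rewrite expr0 mul1r.
set F := unmarked_blocks d J; set A := marked_block (J.+1 * d) d.
have mF : measurable F by exact: measurable_unmarked_blocks.
have mA : measurable A by exact: measurable_marked_block.
have mFA : measurable (F `&` A) by exact: measurableI.
have mFdA : measurable (F `\` A) by exact: measurableD.
have finE X : measurable X -> mu X = (fine (mu X))%:E.
  by move=> mX; rewrite fineK //; exact: fin_num_measure.
have measure_FA : fine (mu (F `\` A)) = fine (mu F) - fine (mu (F `&` A)).
  apply/EFin_inj; rewrite EFinB -!finE //.
  by apply: measureD => //; rewrite ltey_eq fin_num_measure.
have Jd_gt0 : (0 < J.+1 * d)%N by rewrite muln_gt0 d_gt0.
have := measure_marked_block d Jd_gt0 mF (@saturated_unmarked_blocks d J).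
rewrite (finE _ mF) (finE _ mFA) -EFinM lee_fin => massA.
rewrite -setDE measure_FA.
rewrite exprS -mulrA; apply: (@le_trans _ _ ((1 - c ^+ d) * fine (mu F))).
  by rewrite mulrBl mul1r lerD2l lerN2.
by apply: ler_wpM2l => //; rewrite subr_ge0 exprn_ile1 ?(ltW c_gt0).
Qed.

Lemma measure_unmarked_forever d : (0 < d)%N ->
  mu (\bigcap_J unmarked_blocks d J) = 0%E.
Proof.
move=> d_gt0; set U := \bigcap_J _.
have mU : measurable U.
  by apply: bigcapT_measurable => J; exact: measurable_unmarked_blocks.
rewrite -(fineK (fin_num_measure _ _ mU)); congr EFin; apply/eqP.
rewrite eq_le fine_ge0 ?measure_ge0 // andbT.
apply: (@le0_geometric_bound _ _ (fine (mu setT)) (1 - c ^+ d)).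
  by rewrite subr_ge0 exprn_ile1 ?(ltW c_gt0) //= ltrBlDr ltrDl exprn_gt0.
move=> J; have mUJ := @measurable_unmarked_blocks d J.
rewrite mulrC; apply: le_trans (@measure_unmarked_blocks d J d_gt0).
rewrite -lee_fin !fineK ?fin_num_measure //.
by apply: le_measure; rewrite ?inE // => y; apply.
Qed.

Lemma ae_marked_run d : \forall x \ae mu, (0 < d)%N -> exists n : nat,
  forall k, (1 <= k <= d)%N -> Bn (n + k) x `<=` Gamma (n + k).
Proof.
have [-> | d_gt0] := posnP d; first exact: aeW.
exists (\bigcap_J unmarked_blocks d J); split.
- by apply: bigcapT_measurable => J; exact: measurable_unmarked_blocks.
- exact: measure_unmarked_forever.
move=> x no_run J _; elim: J => [|J IH] //=; split => // blockJ.
apply: no_run => _; exists (J.+1 * d)%N => k kd y Bxy.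
have n_gt0 : (0 < J.+1 * d + k)%N by rewrite addn_gt0 muln_gt0 d_gt0.
exact: Gamma_saturated n_gt0 x y (marked_blockP blockJ kd) Bxy.
Qed.

End MarkedBlocks.

End Measure.
End LevelSets.

Theorem lemma2 (R : realType) (m : nat) (hm : (2 <= m)%N)
  (mu : {finite_measure set (borelT m) -> \bar R})
  (mu_nz : mu setT != 0%E)
  (Gamma : nat -> set (borelT m))
  (HG : forall n, (0 < n)%N -> union_of_level n (Gamma n))
  (K : R) (hK : 0 < K)
  (Hmass : forall n, (0 < n)%N -> forall I, interval_of_level n I ->
     (K%:E * mu I <= mu (I `&` Gamma n.+1))%E) :
  {ae mu, forall x, forall d, (0 < d)%N -> exists n : nat,
     forall k, (1 <= k <= d)%N -> Bn (n + k)%N x `<=` Gamma (n + k)%N}.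
Proof.
(* Capping K at 1 keeps 1 - c^d in [0, 1). *)
pose c := Num.min K 1.
have c_gt0 : 0 < c by rewrite lt_min hK ltr01.
have c_le1 : c <= 1 by rewrite ge_min lexx orbT.
have ratio n : (0 < n)%N -> forall x,
    (c%:E * mu (Bn n x) <= mu (Bn n x `&` Gamma n.+1))%E.
  move=> n_gt0 x; apply: le_trans (Hmass n n_gt0 _ (ex_intro _ x erefl)).
  by apply: lee_wpmul2r => //; rewrite lee_fin ge_min lexx.
have run d := ae_marked_run c_gt0 c_le1
  (fun n n_gt0 => union_of_level_saturated (HG n n_gt0))
  (fun n n_gt0 => union_of_level_measurable (HG n n_gt0)) ratio d.
by apply: filterS (ae_foralln run) => x run_x d; exact: run_x.
Qed.
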